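(* Let $a_1,\dots,a_{k-1}, b, \tilde b \in \mathbb{R}^n$ with $b,\tilde b\neq 0$, and let $U=\mathrm{span}\{a_1,\dots,a_{k-1}\}$, $V=\mathrm{span}\{a_1,\dots,a_{k-1},b\}$, $\tilde V=\mathrm{span}\{a_1,\dots,a_{k-1},\tilde b\}$. Then $$\theta(V,\tilde V)\;\le\;\frac{\pi}{2}\,\frac{\theta(\tilde b, b)}{\theta(\tilde b, U)},$$ where the right-hand side is interpreted as $+\infty$ if $\theta(\tilde b,U)=0$.
   Context: For nonzero vectors $a,b$, $\theta(a,b)$ is the angle between them. For a nonzero vector $a$ and a subspace $V$, $\theta(a,V)=\min_{0\ne b\in V}\theta(a,b)$ (taken to be $\pi/2$ if $V=\{0\}$). For subspaces $U,V$, $\theta(U,V)=\max_{0\ne u\in U}\theta(u,V)$; thus $\theta(U,V)\le\alpha$ iff every nonzero $u\in U$ has some $v\in V$ with $\theta(u,v)\le\alpha$. *)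

(* real Euclidean space R^n, vectors as nat -> R restricted to coords < n. *)
From Stdlib Require Import Reals Lra Lia.
Open Scope R_scope.

Fixpoint fsum (m : nat) (f : nat -> R) : R :=
  match m with O => 0 | S m' => fsum m' f + f m' end.

Definition vec := nat -> R.

Definition dot (n : nat) (x y : vec) : R := fsum n (fun i => x i * y i).
Definition vnorm (n : nat) (x : vec) : R := sqrt (dot n x x).
Definition nonzero_vec (n : nat) (x : vec) : Prop := exists i, (i < n)%nat /\ x i <> 0.

Definition angle (n : nat) (x y : vec) : R :=
  acos (dot n x y / (vnorm n x * vnorm n y)).

Definition in_span (n m : nat) (a : nat -> vec) (v : vec) : Prop :=
  exists c : nat -> R, forall i, (i < n)%nat -> v i = fsum m (fun j => c j * a j i).

Definition in_span_ext (n m : nat) (a : nat -> vec) (b v : vec) : Prop :=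
  exists (c : nat -> R) (d : R),
    forall i, (i < n)%nat -> v i = fsum m (fun j => c j * a j i) + d * b i.

Definition angle_to_subspace (n : nat) (x : vec) (W : vec -> Prop) (t : R) : Prop :=
  ((forall w, W w -> ~ nonzero_vec n w) /\ t = PI / 2) \/
  ((exists w, W w /\ nonzero_vec n w /\ angle n x w = t) /\
   (forall w, W w -> nonzero_vec n w -> t <= angle n x w)).

From Stdlib Require Import Reals Lra Lia Classical.
From Coquelicot Require Import Coquelicot.
Open Scope R_scope.

(* Split bt = P + Q and b = X + Y with P, X in U and Q, Y orthogonal to U, so
   that theta(bt, U) = t with sin t = |Q| / |bt|.  A vector u = y0 + d Y of V
   (y0 in U) is matched with v = y0 + (d |Y| / |Q|) Q in Vt, which has the same
   length and makes with u an angle at most theta(Q, Y).  Elementary algebra gives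
   |Q| sin theta(Q, Y) <= |bt| sin phi for phi = theta(bt, b), and the concavity
   estimate sin phi <= sin t sin (pi phi / (2 t)) for phi <= t <= pi/2 turns this
   into theta(Q, Y) <= (pi/2) phi / t.  When phi >= t the bound is at least pi/2,
   and v = +-bt suffices. *)

Lemma mvt_derive (f df : R -> R) a b : a < b -> (forall x, is_derive f x (df x)) ->
  exists c, a <= c <= b /\ f b - f a = df c * (b - a).
Proof.
  intros Hab Hf.
  destruct (MVT_gen f a b df) as [c [Hc E]].
  - intros x _; apply Hf.
  - intros x _. apply continuity_pt_filterlim, (ex_derive_continuous f x).
    exists (df x); apply Hf.
  - exists c. rewrite Rmin_left, Rmax_right in Hc by lra. auto.
Qed.

Lemma concave_nonneg_between_zeros (G G1 G2 : R -> R) T :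
  (forall x, is_derive G x (G1 x)) -> (forall x, is_derive G1 x (G2 x)) ->
  (forall x, 0 <= x <= T -> G2 x <= 0) -> G 0 = 0 -> G T = 0 ->
  forall x, 0 <= x <= T -> 0 <= G x.
Proof.
  intros D1 D2 Hconc G0 GT x Hx.
  destruct (Rle_or_lt 0 (G x)) as [Hge|Hneg]; [exact Hge | exfalso].
  assert (Hx0 : 0 < x) by (destruct (Req_dec x 0); [subst; lra | lra]).
  assert (HxT : x < T) by (destruct (Req_dec x T); [subst; lra | lra]).
  destruct (mvt_derive G G1 0 x) as [c1 [Hc1 E1]]; auto.
  destruct (mvt_derive G G1 x T) as [c2 [Hc2 E2]]; auto.
  assert (Hd1 : G1 c1 < 0) by (destruct (Rle_or_lt 0 (G1 c1)); auto; nra).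
  assert (Hd2 : 0 < G1 c2) by (destruct (Rle_or_lt (G1 c2) 0); auto; nra).
  destruct (Rle_or_lt c2 c1) as [Hc21|Hc12].
  { assert (c1 = c2) by lra. subst. lra. }
  destruct (mvt_derive G1 G2 c1 c2) as [c3 [Hc3 E3]]; auto.
  assert (G2 c3 <= 0) by (apply Hconc; lra). nra.
Qed.

Lemma jordan_sin_ge t : 0 <= t <= PI / 2 -> 2 * t / PI <= sin t.
Proof.
  intro Ht. pose proof PI_RGT_0.
  enough (0 <= sin t - 2 * t / PI) by lra.
  apply (concave_nonneg_between_zeros (fun t => sin t - 2 * t / PI)
    (fun t => cos t - 2 / PI) (fun t => - sin t) (PI / 2)); auto.
  - intro y. auto_derive; auto. field. lra.
  - intro y. auto_derive; auto. ring.
  - intros y Hy. pose proof (sin_ge_0 y). lra.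
  - rewrite sin_0. field. lra.
  - rewrite sin_PI2. field. lra.
Qed.

(* With k = PI / (2 t), y |-> sin t * sin (k y) - sin y vanishes at 0 and t, and
   it is concave on [0, t] because k * sin t >= 1 by Jordan's inequality. *)
Lemma sin_le_sin_mul_sin_scaled phi t : 0 <= phi <= t -> 0 < t <= PI / 2 ->
  sin phi <= sin t * sin (PI / 2 * (phi / t)).
Proof.
  intros Hphi Ht. pose proof PI_RGT_0.
  set (k := PI / (2 * t)).
  assert (Hk : 1 <= k).
  { unfold k. apply Rmult_le_reg_r with (2 * t); [lra|]. field_simplify; lra. }
  assert (Hkt : sin t * k >= 1).
  { pose proof (jordan_sin_ge t ltac:(lra)).
    apply Rle_ge, Rle_trans with (2 * t / PI * k).
    - right. unfold k. field. lra.
    - apply Rmult_le_compat_r; lra. }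
  replace (PI / 2 * (phi / t)) with (k * phi) by (unfold k; field; lra).
  enough (0 <= sin t * sin (k * phi) - sin phi) by lra.
  apply (concave_nonneg_between_zeros (fun y => sin t * sin (k * y) - sin y)
    (fun y => sin t * (k * cos (k * y)) - cos y)
    (fun y => - sin t * (k * (k * sin (k * y))) + sin y) t); auto.
  - intro y. auto_derive; auto. ring.
  - intro y. auto_derive; auto. ring.
  - intros y Hy.
    assert (Hky : k * y <= PI / 2).
    { unfold k. apply Rmult_le_reg_r with (2 * t); [lra|]. field_simplify; nra. }
    assert (sin y <= sin (k * y)) by (apply sin_incr_1; nra).
    assert (0 <= sin (k * y)) by (apply sin_ge_0; nra).
    assert (k * sin (k * y) >= sin (k * y)) by nra.
    nra.
  - rewrite Rmult_0_r, sin_0. ring.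
  - replace (k * t) with (PI / 2) by (unfold k; field; lra).
    rewrite sin_PI2. ring.
Qed.

Lemma acos_decreasing x y : -1 <= x <= 1 -> -1 <= y <= 1 -> x <= y -> acos y <= acos x.
Proof.
  intros Hx Hy Hxy.
  destruct (Rle_or_lt (acos y) (acos x)) as [Hle|Hlt]; auto.
  pose proof (acos_bound x). pose proof (acos_bound y).
  pose proof (cos_decreasing_1 (acos x) (acos y)) as Hcos.
  rewrite !cos_acos in Hcos by auto.
  assert (y < x) by (apply Hcos; lra). lra.
Qed.

Lemma acos_lt_inv x y : -1 <= x <= 1 -> -1 <= y <= 1 -> acos x < acos y -> y < x.
Proof.
  intros Hx Hy Hlt. destruct (Rlt_or_le y x) as [H|H]; auto.
  pose proof (acos_decreasing x y Hx Hy H). lra.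
Qed.

(* Read p, q (resp. x, y) as the lengths of the components of bt (resp. b) in U
   and in its orthogonal complement, and s, e as the inner products of matching
   components: the conclusion is |Q| sin theta(Q, Y) <= |bt| sin theta(bt, b).
   After clearing denominators the defect is the square (p y^2 - x e)^2. *)
Lemma perp_sine_sq_le p q x y B N s e :
  0 <= p -> 0 < q -> 0 <= x -> 0 < y -> 0 < B -> 0 < N ->
  B * B = p * p + q * q -> N * N = x * x + y * y -> s <= p * x -> p * N < s + e ->
  0 <= e /\
  q * q * (1 - e / (q * y) * (e / (q * y))) <=
    B * B * (1 - (s + e) / (B * N) * ((s + e) / (B * N))).
Proof.
  intros Hp Hq Hx Hy HB HN EB EN Hs He.
  assert (x <= N) by nra.
  assert (He0 : 0 <= e) by nra. split; auto.
  replace (q * q * (1 - e / (q * y) * (e / (q * y))))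
    with ((q * q * y * y - e * e) / (y * y)) by (field; lra).
  replace (B * B * (1 - (s + e) / (B * N) * ((s + e) / (B * N))))
    with ((B * B * N * N - (s + e) * (s + e)) / (N * N)) by (field; lra).
  assert (0 <= s + e) by nra.
  assert ((s + e) * (s + e) <= (p * x + e) * (p * x + e)) by nra.
  assert (Id : (B * B * N * N - (p * x + e) * (p * x + e)) * (y * y)
               - (q * q * y * y - e * e) * (N * N) = (p * y * y - x * e) ^ 2).
  { replace (B * B * N * N) with ((B * B) * (N * N)) by ring. rewrite EB, EN. ring. }
  apply Rmult_le_reg_r with (y * y * (N * N)); [apply Rmult_lt_0_compat; nra|].
  replace ((q * q * y * y - e * e) / (y * y) * (y * y * (N * N)))
    with ((q * q * y * y - e * e) * (N * N)) by (field; lra).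
  replace ((B * B * N * N - (s + e) * (s + e)) / (N * N) * (y * y * (N * N)))
    with ((B * B * N * N - (s + e) * (s + e)) * (y * y)) by (field; lra).
  pose proof (pow2_ge_0 (p * y * y - x * e)).
  nra.
Qed.

Lemma perp_angle_le p q x y B N s e :
  0 <= p -> 0 < q -> 0 <= x -> 0 < y -> 0 < B -> 0 < N ->
  B * B = p * p + q * q -> N * N = x * x + y * y -> s <= p * x -> e <= q * y ->
  -1 <= (s + e) / (B * N) <= 1 -> acos ((s + e) / (B * N)) < acos (p / B) ->
  acos (e / (q * y)) <= PI / 2 * (acos ((s + e) / (B * N)) / acos (p / B)).
Proof.
  intros Hp Hq Hx Hy HB HN EB EN Hs Heq Hc Hlt. pose proof PI_RGT_0.
  set (c := (s + e) / (B * N)) in *. set (phi := acos c) in *.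
  set (t := acos (p / B)) in *. set (g := e / (q * y)).
  set (th := PI / 2 * (phi / t)).
  assert (HpB : 0 <= p / B <= 1).
  { split; [apply Rmult_le_pos; [lra | left; apply Rinv_0_lt_compat; lra]|].
    apply Rmult_le_reg_r with B; auto. unfold Rdiv. rewrite Rmult_assoc, Rinv_l by lra. nra. }
  assert (HpN : p * N < s + e).
  { assert (p / B < c) by (apply acos_lt_inv; auto; lra).
    apply Rmult_lt_compat_r with (r := B * N) in H0; [|nra]. unfold c in H0.
    replace (p / B * (B * N)) with (p * N) in H0 by (field; lra).
    replace ((s + e) / (B * N) * (B * N)) with (s + e) in H0 by (field; nra). lra. }
  destruct (perp_sine_sq_le p q x y B N s e) as [He Hcore]; auto.
  assert (Hg : 0 <= g <= 1).
  { unfold g. split; [apply Rmult_le_pos; [lra | left; apply Rinv_0_lt_compat; nra]|].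
    apply Rmult_le_reg_r with (q * y); [nra|].
    unfold Rdiv. rewrite Rmult_assoc, Rinv_l by nra. lra. }
  assert (Hphi : 0 <= phi) by apply acos_bound.
  assert (Ht : t <= PI / 2) by (unfold t; rewrite <- acos_0; apply acos_decreasing; lra).
  assert (Hth : 0 <= th < PI / 2).
  { unfold th. split; [apply Rmult_le_pos; [lra | apply Rmult_le_pos; [lra | left; apply Rinv_0_lt_compat; lra]]|].
    rewrite <- (Rmult_1_r (PI / 2)) at 2. apply Rmult_lt_compat_l; [lra|].
    apply Rmult_lt_reg_r with t; [lra|]. unfold Rdiv. rewrite Rmult_assoc, Rinv_l by lra. lra. }
  assert (Hsin_t : sin t = q / B).
  { unfold t. rewrite sin_acos by lra.
    replace (1 - (p / B)²) with ((q / B)²) by (unfold Rsqr; field_simplify_eq; nra).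
    apply sqrt_Rsqr. apply Rmult_le_pos; [lra | left; apply Rinv_0_lt_compat; lra]. }
  assert (Hsin_phi : sin phi = sqrt (1 - c * c)) by (unfold phi; rewrite sin_acos by auto; reflexivity).
  pose proof (sin_le_sin_mul_sin_scaled phi t ltac:(lra) ltac:(lra)) as Hkey.
  fold th in Hkey. rewrite Hsin_t, Hsin_phi in Hkey.
  assert (sth0 : 0 <= sin th) by (apply sin_ge_0; lra).
  assert (cth0 : 0 <= cos th) by (apply cos_ge_0; lra).
  assert (Hsq : B * B * (1 - c * c) <= q * q * (sin th * sin th)).
  { assert (0 <= 1 - c * c) by nra.
    pose proof (sqrt_sqrt _ H0). pose proof (sqrt_pos (1 - c * c)).
    assert (1 - c * c <= q / B * sin th * (q / B * sin th)) by nra.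
    apply Rmult_le_compat_l with (r := B * B) in H3; [|nra].
    replace (B * B * (q / B * sin th * (q / B * sin th))) with (q * q * (sin th * sin th)) in H3
      by (field; lra). lra. }
  assert (H1g : 1 - g * g <= sin th * sin th).
  { apply Rmult_le_reg_l with (q * q); [nra|]. unfold g. unfold c in Hsq. lra. }
  assert (Hcg : cos th <= g).
  { assert (cos th * cos th <= g * g) by (pose proof (sin2_cos2 th); unfold Rsqr in *; lra).
    nra. }
  apply Rle_trans with (acos (cos th)).
  - pose proof (COS_bound th). apply acos_decreasing; lra.
  - rewrite acos_cos; lra.
Qed.

Lemma fsum_ext m f g : (forall i, (i < m)%nat -> f i = g i) -> fsum m f = fsum m g.
Proof. induction m; intros H; simpl; auto. rewrite IHm, H; auto. Qed.

Lemma fsum_plus m f g : fsum m (fun i => f i + g i) = fsum m f + fsum m g.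
Proof. induction m; simpl; [ring | rewrite IHm; ring]. Qed.

Lemma fsum_scal m c f : fsum m (fun i => c * f i) = c * fsum m f.
Proof. induction m; simpl; [ring | rewrite IHm; ring]. Qed.

Lemma fsum_zero m f : (forall i, (i < m)%nat -> f i = 0) -> fsum m f = 0.
Proof. induction m; intros H; simpl; auto. rewrite IHm, H; auto. ring. Qed.

Lemma fsum_swap n m (f : nat -> nat -> R) :
  fsum n (fun i => fsum m (fun j => f i j)) = fsum m (fun j => fsum n (fun i => f i j)).
Proof.
  induction m; simpl.
  - apply fsum_zero; auto.
  - rewrite fsum_plus, IHm. reflexivity.
Qed.

Lemma fsum_nonneg m f : (forall i, (i < m)%nat -> 0 <= f i) -> 0 <= fsum m f.
Proof.
  induction m; intros H; simpl; [lra|].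
  assert (0 <= f m) by auto. assert (0 <= fsum m f) by auto. lra.
Qed.

Lemma fsum_nonneg_eq0 m f : (forall i, (i < m)%nat -> 0 <= f i) -> fsum m f = 0 ->
  forall i, (i < m)%nat -> f i = 0.
Proof.
  induction m; intros H E i Hi; [lia|]. simpl in E.
  assert (0 <= f m) by auto. assert (0 <= fsum m f) by (apply fsum_nonneg; auto).
  destruct (Nat.eq_dec i m); [subst; lra|]. apply IHm; auto; [lra | lia].
Qed.

Definition vadd (x y : vec) : vec := fun i => x i + y i.
Definition vsub (x y : vec) : vec := fun i => x i - y i.
Definition vscal (c : R) (x : vec) : vec := fun i => c * x i.

Section Euclidean.
Variable n : nat.

Lemma dot_ext x y x' y' : (forall i, (i < n)%nat -> x i = x' i) ->
  (forall i, (i < n)%nat -> y i = y' i) -> dot n x y = dot n x' y'.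
Proof. intros Ex Ey. unfold dot. apply fsum_ext. intros. rewrite Ex, Ey; auto. Qed.

Lemma dot_sym x y : dot n x y = dot n y x.
Proof. unfold dot. apply fsum_ext. intros; ring. Qed.

Lemma dot_add_l x y z : dot n (vadd x y) z = dot n x z + dot n y z.
Proof. unfold dot, vadd. rewrite <- fsum_plus. apply fsum_ext; intros; ring. Qed.

Lemma dot_add_r x y z : dot n z (vadd x y) = dot n z x + dot n z y.
Proof. rewrite dot_sym, dot_add_l, (dot_sym x), (dot_sym y). auto. Qed.

Lemma dot_scal_l c x y : dot n (vscal c x) y = c * dot n x y.
Proof. unfold dot, vscal. rewrite <- fsum_scal. apply fsum_ext; intros; ring. Qed.

Lemma dot_scal_r c x y : dot n y (vscal c x) = c * dot n y x.
Proof. rewrite dot_sym, dot_scal_l, dot_sym. auto. Qed.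

Lemma dot_sub_l x y z : dot n (vsub x y) z = dot n x z - dot n y z.
Proof.
  rewrite (dot_ext (vsub x y) z (vadd x (vscal (-1) y)) z) by (intros; unfold vsub, vadd, vscal; ring).
  rewrite dot_add_l, dot_scal_l. ring.
Qed.

Lemma dot_sub_r x y z : dot n z (vsub x y) = dot n z x - dot n z y.
Proof. rewrite dot_sym, dot_sub_l, (dot_sym x), (dot_sym y). auto. Qed.

Lemma dot_self_nonneg x : 0 <= dot n x x.
Proof. unfold dot. apply fsum_nonneg. intros. apply Rle_0_sqr. Qed.

Lemma dot_self_eq0 x : dot n x x = 0 -> forall i, (i < n)%nat -> x i = 0.
Proof.
  intros E i Hi.
  assert (Hi2 : x i * x i = 0).
  { apply (fsum_nonneg_eq0 n (fun i => x i * x i)); auto. intros; apply Rle_0_sqr. }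
  destruct (Rmult_integral _ _ Hi2); auto.
Qed.

Lemma dot_zero_l x y : ~ nonzero_vec n x -> dot n x y = 0.
Proof.
  intro Hx. unfold dot. apply fsum_zero. intros i Hi.
  assert (x i = 0) as -> by (apply NNPP; intro; apply Hx; exists i; auto). ring.
Qed.

Lemma nonzero_vec_dot x : nonzero_vec n x <-> 0 < dot n x x.
Proof.
  split.
  - intros [i [Hi Hx]]. destruct (dot_self_nonneg x) as [h|h]; auto.
    exfalso. apply Hx. apply dot_self_eq0; auto.
  - intro H. apply NNPP. intro Hx. rewrite dot_zero_l in H; auto. lra.
Qed.

Lemma cauchy_schwarz x y : dot n x y * dot n x y <= dot n x x * dot n y y.
Proof.
  destruct (dot_self_nonneg y) as [Hy|Hy].
  - set (l := dot n x y / dot n y y).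
    pose proof (dot_self_nonneg (vsub x (vscal l y))) as H.
    rewrite !dot_sub_l, !dot_sub_r, !dot_scal_l, !dot_scal_r, (dot_sym y x) in H.
    assert (El : l * dot n y y = dot n x y) by (unfold l; field; lra).
    assert (0 <= dot n x x - l * dot n x y) by nra.
    nra.
  - rewrite dot_sym, dot_zero_l, <- Hy by (rewrite nonzero_vec_dot; lra). lra.
Qed.

Lemma vnorm_sq x : vnorm n x * vnorm n x = dot n x x.
Proof. apply sqrt_sqrt, dot_self_nonneg. Qed.

Lemma vnorm_nonneg x : 0 <= vnorm n x.
Proof. apply sqrt_pos. Qed.

Lemma vnorm_pos x : nonzero_vec n x -> 0 < vnorm n x.
Proof. intro H. apply sqrt_lt_R0, nonzero_vec_dot, H. Qed.

Lemma vnorm_ext x y : (forall i, (i < n)%nat -> x i = y i) -> vnorm n x = vnorm n y.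
Proof. intros E. unfold vnorm. f_equal. apply dot_ext; auto. Qed.

Lemma abs_dot_le x y : Rabs (dot n x y) <= vnorm n x * vnorm n y.
Proof.
  pose proof (cauchy_schwarz x y). pose proof (vnorm_sq x). pose proof (vnorm_sq y).
  pose proof (vnorm_nonneg x). pose proof (vnorm_nonneg y).
  apply Rsqr_incr_0_var; [|nra]. unfold Rsqr.
  rewrite <- Rabs_mult, Rabs_right by (apply Rle_ge; nra). nra.
Qed.

Lemma dot_le x y : dot n x y <= vnorm n x * vnorm n y.
Proof. pose proof (abs_dot_le x y). pose proof (Rle_abs (dot n x y)). lra. Qed.

Lemma cos_angle_bound x y : nonzero_vec n x -> nonzero_vec n y ->
  -1 <= dot n x y / (vnorm n x * vnorm n y) <= 1.
Proof.
  intros Hx Hy. pose proof (vnorm_pos x Hx). pose proof (vnorm_pos y Hy).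
  assert (Hxy : 0 < vnorm n x * vnorm n y) by nra.
  pose proof (abs_dot_le x y). pose proof (Rle_abs (dot n x y)).
  pose proof (Rle_abs (- dot n x y)). rewrite Rabs_Ropp in *.
  split; apply Rmult_le_reg_r with (vnorm n x * vnorm n y); auto;
    unfold Rdiv; rewrite Rmult_assoc, Rinv_l by lra; lra.
Qed.

Lemma angle_ext x y x' y' : (forall i, (i < n)%nat -> x i = x' i) ->
  (forall i, (i < n)%nat -> y i = y' i) -> angle n x y = angle n x' y'.
Proof.
  intros Ex Ey. unfold angle.
  rewrite (dot_ext x y x' y'), (vnorm_ext x x'), (vnorm_ext y y'); auto.
Qed.

Lemma angle_self u : nonzero_vec n u -> angle n u u = 0.
Proof.
  intros H. unfold angle. pose proof (vnorm_pos u H).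
  rewrite <- (vnorm_sq u), Rdiv_diag by nra. apply acos_1.
Qed.

Lemma angle_le_PI2 x y : nonzero_vec n x -> nonzero_vec n y -> 0 <= dot n x y ->
  angle n x y <= PI / 2.
Proof.
  intros Hx Hy H. unfold angle. rewrite <- acos_0.
  pose proof (vnorm_pos x Hx). pose proof (vnorm_pos y Hy).
  apply acos_decreasing; [lra | apply cos_angle_bound; auto|].
  apply Rmult_le_pos; auto. left; apply Rinv_0_lt_compat; nra.
Qed.

End Euclidean.

Section Span.
Variables (n m : nat) (a : nat -> vec).

Lemma in_span_zero : in_span n m a (fun _ => 0).
Proof. exists (fun _ => 0). intros. symmetry. apply fsum_zero. intros; ring. Qed.

Lemma in_span_add x y : in_span n m a x -> in_span n m a y -> in_span n m a (vadd x y).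
Proof.
  intros [c Hc] [d Hd]. exists (fun j => c j + d j). intros i Hi.
  unfold vadd. rewrite Hc, Hd by auto. rewrite <- fsum_plus. apply fsum_ext; intros; ring.
Qed.

Lemma in_span_scal k x : in_span n m a x -> in_span n m a (vscal k x).
Proof.
  intros [c Hc]. exists (fun j => k * c j). intros i Hi.
  unfold vscal. rewrite Hc by auto. rewrite <- fsum_scal. apply fsum_ext; intros; ring.
Qed.

Lemma in_span_ext_coords x y : (forall i, (i < n)%nat -> x i = y i) ->
  in_span n m a x -> in_span n m a y.
Proof. intros E [c Hc]. exists c. intros. rewrite <- E; auto. Qed.

Lemma in_span_sub x y : in_span n m a x -> in_span n m a y -> in_span n m a (vsub x y).
Proof.
  intros Hx Hy. apply in_span_ext_coords with (vadd x (vscal (-1) y)).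
  - intros; unfold vsub, vadd, vscal; ring.
  - apply in_span_add, in_span_scal; auto.
Qed.

Lemma dot_in_span_eq0 x : (forall j, (j < m)%nat -> dot n x (a j) = 0) ->
  forall w, in_span n m a w -> dot n x w = 0.
Proof.
  intros H w [c Hc]. unfold dot.
  rewrite (fsum_ext n _ (fun i => fsum m (fun j => c j * (x i * a j i)))).
  - rewrite fsum_swap. apply fsum_zero. intros j Hj. rewrite fsum_scal.
    specialize (H j Hj). unfold dot in H. rewrite H. ring.
  - intros i Hi. rewrite Hc by auto. rewrite <- fsum_scal. apply fsum_ext; intros; ring.
Qed.

Lemma in_span_ext_iff b v : in_span_ext n m a b v <->
  exists w d, in_span n m a w /\ forall i, (i < n)%nat -> v i = w i + d * b i.
Proof.
  split.
  - intros [c [d H]]. exists (fun i => fsum m (fun j => c j * a j i)), d.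
    split; auto. exists c. auto.
  - intros [w [d [[c Hc] H]]]. exists c, d. intros. rewrite H, Hc; auto.
Qed.

End Span.

Lemma in_span_S n m a x : in_span n m a x -> in_span n (S m) a x.
Proof.
  intros [c Hc]. exists (fun j => if Nat.eqb j m then 0 else c j).
  intros i Hi. simpl. rewrite Nat.eqb_refl, Hc by auto.
  rewrite Rmult_0_l, Rplus_0_r. apply fsum_ext. intros j Hj.
  destruct (Nat.eqb_spec j m); [lia | auto].
Qed.

Lemma in_span_last n m a : in_span n (S m) a (a m).
Proof.
  exists (fun j => if Nat.eqb j m then 1 else 0).
  intros i Hi. simpl. rewrite Nat.eqb_refl, fsum_zero; [ring|].
  intros j Hj. destruct (Nat.eqb_spec j m); [lia | ring].
Qed.

Lemma in_span_gen n m a j : (j < m)%nat -> in_span n m a (a j).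
Proof.
  intro Hj. induction Hj.
  - apply in_span_last.
  - apply in_span_S, IHHj.
Qed.

Definition orth_proj (n m : nat) (a : nat -> vec) (x p : vec) : Prop :=
  in_span n m a p /\ forall w, in_span n m a w -> dot n (vsub x p) w = 0.

(* Gram-Schmidt: project a_m onto the first m generators and correct the
   projection of x along the residual of a_m. *)
Lemma orth_proj_exists n m a x : exists p, orth_proj n m a x p.
Proof.
  revert x. induction m as [|m IH]; intro x.
  - exists (fun _ => 0). split; [apply in_span_zero|].
    intros w Hw. apply dot_in_span_eq0 with 0%nat a; auto. intros; lia.
  - destruct (IH (a m)) as [q [Hq Oq]].
    destruct (IH x) as [p [Hp Op]].
    set (r := vsub (a m) q).
    assert (Hamr : forall i, (i < n)%nat -> a m i = vadd q r i)
      by (intros; unfold r, vsub, vadd; ring).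
    destruct (dot_self_nonneg n r) as [Hr|Hr].
    + set (c := dot n (vsub x p) r / dot n r r).
      exists (vadd p (vscal c r)). split.
      * apply in_span_add; [apply in_span_S; auto|]. apply in_span_scal, in_span_sub.
        -- apply in_span_last.
        -- apply in_span_S; auto.
      * apply dot_in_span_eq0. intros j Hj.
        assert (Hres : forall i, (i < n)%nat ->
                  vsub x (vadd p (vscal c r)) i = vsub (vsub x p) (vscal c r) i)
          by (intros; unfold vsub, vadd, vscal; ring).
        rewrite (dot_ext n _ _ _ (a j) Hres (fun _ _ => eq_refl)), dot_sub_l, dot_scal_l.
        destruct (Nat.eq_dec j m) as [->|Hjm].
        -- rewrite (dot_ext n _ _ (vsub x p) (vadd q r) (fun _ _ => eq_refl) Hamr).
           rewrite (dot_ext n _ _ r (vadd q r) (fun _ _ => eq_refl) Hamr).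
           rewrite !dot_add_r, Op, Oq by auto. unfold c. field. lra.
        -- assert (Hj' : in_span n m a (a j)) by (apply in_span_gen; lia).
           rewrite Op, Oq by auto. ring.
    + exists p. split; [apply in_span_S; auto|].
      apply dot_in_span_eq0. intros j Hj.
      destruct (Nat.eq_dec j m) as [->|Hjm].
      * rewrite (dot_ext n _ (a m) (vsub x p) q); auto.
        intros i Hi. pose proof (dot_self_eq0 n r (eq_sym Hr) i Hi).
        unfold r, vsub in H. lra.
      * apply Op, in_span_gen. lia.
Qed.

Lemma vscal_nonzero n c x : nonzero_vec n (vscal c x) -> c <> 0 /\ nonzero_vec n x.
Proof.
  intros [i [Hi H]]. unfold vscal in H.
  split; [intro E | exists i; split; auto; intro E]; apply H; rewrite E; ring.
Qed.

(* The two vectors have the same length, and their inner product exceeds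
   g |u|^2 by (1 - g) |y0|^2 >= 0, where g is the cosine of the angle (Q, Y). *)
Lemma angle_rotate_le n y0 Y Q d c :
  dot n y0 Y = 0 -> dot n y0 Q = 0 -> nonzero_vec n (vscal d Y) -> nonzero_vec n Q ->
  c * vnorm n Q = d * vnorm n Y ->
  nonzero_vec n (vadd y0 (vscal c Q)) /\
  angle n (vadd y0 (vscal d Y)) (vadd y0 (vscal c Q)) <=
    acos (dot n Q Y / (vnorm n Q * vnorm n Y)).
Proof.
  intros HY HQ HdY Hq Hc.
  destruct (vscal_nonzero n d Y HdY) as [Hd Hy].
  pose proof (vnorm_pos n Q Hq) as Hq0. pose proof (vnorm_pos n Y Hy) as Hy0.
  pose proof (vnorm_sq n Q) as EQ. pose proof (vnorm_sq n Y) as EY.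
  pose proof (dot_self_nonneg n y0) as Hy00.
  pose proof (cos_angle_bound n Q Y Hq Hy) as Hg.
  set (g := dot n Q Y / (vnorm n Q * vnorm n Y)) in *.
  set (u := vadd y0 (vscal d Y)). set (v := vadd y0 (vscal c Q)).
  set (K := dot n y0 y0 + (d * vnorm n Y) * (d * vnorm n Y)).
  assert (HK : 0 < K).
  { assert (Hdy : d * vnorm n Y <> 0) by (apply Rmult_integral_contrapositive; split; lra).
    pose proof (Rsqr_pos_lt _ Hdy). unfold K, Rsqr in *. lra. }
  assert (Huu : dot n u u = K).
  { unfold u, K. rewrite !dot_add_l, !dot_add_r, !dot_scal_l, !dot_scal_r,
      (dot_sym n Y y0), HY, <- EY. ring. }
  assert (Hvv : dot n v v = K).
  { unfold v, K. rewrite !dot_add_l, !dot_add_r, !dot_scal_l, !dot_scal_r,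
      (dot_sym n Q y0), HQ, <- EQ, <- Hc. ring. }
  assert (Huv : dot n u v = dot n y0 y0 + (d * vnorm n Y) * (d * vnorm n Y) * g).
  { unfold u, v, g. rewrite !dot_add_l, !dot_add_r, !dot_scal_l, !dot_scal_r,
      (dot_sym n Y y0), HY, HQ, (dot_sym n Y Q).
    replace c with (d * vnorm n Y / vnorm n Q) by (rewrite <- Hc; field; lra).
    field. lra. }
  assert (Hu : nonzero_vec n u) by (apply nonzero_vec_dot; lra).
  assert (Hv : nonzero_vec n v) by (apply nonzero_vec_dot; lra).
  assert (Hnorms : vnorm n u * vnorm n v = K) by (unfold vnorm; rewrite Huu, Hvv; apply sqrt_sqrt; lra).
  split; auto.
  pose proof (cos_angle_bound n u v Hu Hv) as Huvb.
  unfold angle. rewrite Hnorms in *. apply acos_decreasing; auto.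
  apply Rmult_le_reg_r with K; auto.
  unfold Rdiv. rewrite Rmult_assoc, Rinv_l, Huv by lra. unfold K.
  assert (0 <= (1 - g) * dot n y0 y0) by (apply Rmult_le_pos; lra). nra.
Qed.

Section Geometry.
Variables (n m : nat) (a : nat -> vec).

Lemma orth_proj_dot x p y r : orth_proj n m a x p -> orth_proj n m a y r ->
  dot n x y = dot n p r + dot n (vsub x p) (vsub y r).
Proof.
  intros [Hp Op] [Hr Or].
  rewrite (dot_ext n x y (vadd p (vsub x p)) (vadd r (vsub y r)))
    by (intros; unfold vadd, vsub; ring).
  rewrite !dot_add_l, !dot_add_r, (Op r Hr), (dot_sym n p (vsub y r)), (Or p Hp). ring.
Qed.

Lemma orth_proj_pythagoras x p : orth_proj n m a x p ->
  vnorm n x * vnorm n x = vnorm n p * vnorm n p + vnorm n (vsub x p) * vnorm n (vsub x p).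
Proof. intro H. rewrite !vnorm_sq. apply orth_proj_dot; auto. Qed.

Lemma orth_proj_dot_span x p w : orth_proj n m a x p -> in_span n m a w ->
  dot n x w = dot n p w.
Proof.
  intros [Hp Op] Hw.
  rewrite (dot_ext n x w (vadd p (vsub x p)) w), dot_add_l, Op
    by (auto; intros; unfold vadd, vsub; ring). ring.
Qed.

Lemma angle_to_span_orth_proj x p : nonzero_vec n x -> orth_proj n m a x p ->
  angle_to_subspace n x (in_span n m a) (acos (vnorm n p / vnorm n x)).
Proof.
  intros Hx Hxp.
  pose proof (vnorm_pos n x Hx) as HX. pose proof (vnorm_nonneg n p) as HP.
  pose proof (vnorm_nonneg n (vsub x p)).
  pose proof (orth_proj_pythagoras x p Hxp) as Epy.
  destruct (classic (nonzero_vec n p)) as [Hp|Hp].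
  - pose proof (vnorm_pos n p Hp).
    right. split.
    + exists p. split; [apply Hxp|]. split; auto.
      unfold angle. rewrite (orth_proj_dot_span x p p Hxp (proj1 Hxp)), <- vnorm_sq.
      f_equal. field. lra.
    + intros w Hw Hnw. pose proof (vnorm_pos n w Hnw).
      unfold angle. apply acos_decreasing.
      * apply cos_angle_bound; auto.
      * split; [apply Rle_trans with 0; [lra|] |];
          (apply Rmult_le_reg_r with (vnorm n x); auto;
           unfold Rdiv; rewrite Rmult_assoc, Rinv_l by lra; nra).
      * rewrite (orth_proj_dot_span x p w Hxp Hw).
        apply Rmult_le_reg_r with (vnorm n x * vnorm n w); [nra|].
        pose proof (dot_le n p w).
        replace (dot n p w / (vnorm n x * vnorm n w) * (vnorm n x * vnorm n w))
          with (dot n p w) by (field; lra).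
        replace (vnorm n p / vnorm n x * (vnorm n x * vnorm n w))
          with (vnorm n p * vnorm n w) by (field; lra). lra.
  - assert (Hp0 : vnorm n p = 0) by (unfold vnorm; rewrite dot_zero_l, sqrt_0; auto).
    rewrite Hp0, Rdiv_0_l, acos_0.
    assert (Hperp : forall w, in_span n m a w -> nonzero_vec n w -> angle n x w = PI / 2).
    { intros w Hw _. unfold angle.
      rewrite (orth_proj_dot_span x p w Hxp Hw), dot_zero_l, Rdiv_0_l by auto. apply acos_0. }
    destruct (classic (exists w, in_span n m a w /\ nonzero_vec n w)) as [[w [Hw Hnw]]|Hnone].
    + right. split.
      * exists w. auto.
      * intros w' Hw' Hnw'. rewrite Hperp; auto. lra.
    + left. split; auto. intros w Hw Hnw. apply Hnone. eauto.
Qed.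

Lemma in_span_ext_scal b c : in_span_ext n m a b (vscal c b).
Proof. exists (fun _ => 0), c. intros. rewrite fsum_zero by (intros; ring). unfold vscal. ring. Qed.

Lemma exists_in_span_ext_angle_le_PI2 b u : nonzero_vec n b -> nonzero_vec n u ->
  exists v, in_span_ext n m a b v /\ nonzero_vec n v /\ angle n u v <= PI / 2.
Proof.
  intros Hb Hu.
  assert (Hs : exists s, s <> 0 /\ 0 <= s * dot n u b)
    by (destruct (Rle_or_lt 0 (dot n u b)); [exists 1 | exists (-1)]; split; lra).
  destruct Hs as [s [Hs Hsd]].
  assert (Hv : nonzero_vec n (vscal s b)).
  { destruct Hb as [i [Hi Hbi]]. exists i. split; auto.
    unfold vscal. apply Rmult_integral_contrapositive; auto. }
  exists (vscal s b). split; [apply in_span_ext_scal|]. split; auto.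
  apply angle_le_PI2; auto. rewrite dot_scal_r. auto.
Qed.

End Geometry.

Section Bound.
Variables (n m : nat) (a : nat -> vec).

Lemma ext_span_angle_bound b bt X P u :
  nonzero_vec n b -> nonzero_vec n bt -> orth_proj n m a b X -> orth_proj n m a bt P ->
  angle n bt b < acos (vnorm n P / vnorm n bt) ->
  in_span_ext n m a b u -> nonzero_vec n u ->
  exists v, in_span_ext n m a bt v /\ nonzero_vec n v /\
    angle n u v <= PI / 2 * (angle n bt b / acos (vnorm n P / vnorm n bt)).
Proof.
  intros Hb Hbt HX HP Hlt Hu Hnu. pose proof PI_RGT_0.
  set (Q := vsub bt P). set (Y := vsub b X).
  assert (Edot : dot n bt b = dot n P X + dot n Q Y) by (apply orth_proj_dot with m a; auto).
  assert (Eang : angle n bt b =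
    acos ((dot n P X + dot n Q Y) / (vnorm n bt * vnorm n b))) by (unfold angle; rewrite Edot; auto).
  pose proof (cos_angle_bound n bt b Hbt Hb) as Hcos. rewrite Edot in Hcos.
  set (t := acos (vnorm n P / vnorm n bt)) in *.
  assert (Hphi : 0 <= angle n bt b) by apply acos_bound.
  assert (Hbd : 0 <= PI / 2 * (angle n bt b / t)).
  { apply Rmult_le_pos; [lra|]. apply Rmult_le_pos; [lra|].
    left; apply Rinv_0_lt_compat; lra. }
  apply in_span_ext_iff in Hu. destruct Hu as [w [d [Hw Hu]]].
  set (y0 := vadd w (vscal d X)).
  assert (Hy0 : in_span n m a y0)
    by (apply in_span_add, in_span_scal; [|apply HX]; auto).
  assert (Hu' : forall i, (i < n)%nat -> u i = vadd y0 (vscal d Y) i)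
    by (intros; rewrite Hu by auto; unfold y0, Y, vadd, vscal, vsub; ring).
  destruct (classic (nonzero_vec n (vscal d Y))) as [HdY|HdY].
  2:{ assert (Hus : in_span n m a u).
      { apply in_span_ext_coords with y0; auto. intros i Hi. rewrite Hu' by auto. unfold vadd.
        assert (vscal d Y i = 0) as -> by (apply NNPP; intro; apply HdY; exists i; auto).
        ring. }
      exists u. split; [|split; auto].
      - apply in_span_ext_iff. exists u, 0. split; auto. intros; ring.
      - rewrite angle_self by auto. auto. }
  destruct (vscal_nonzero n d Y HdY) as [Hd HY].
  pose proof (orth_proj_pythagoras n m a bt P HP) as EB.
  pose proof (orth_proj_pythagoras n m a b X HX) as EN.
  fold Q Y in EB, EN.
  assert (HQ : nonzero_vec n Q).
  { apply NNPP. intro HQ. exfalso.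
    assert (Hq0 : vnorm n Q = 0) by (unfold vnorm; rewrite dot_zero_l, sqrt_0; auto).
    pose proof (vnorm_pos n bt Hbt). pose proof (vnorm_nonneg n P).
    assert (vnorm n P = vnorm n bt) by nra.
    unfold t in Hlt. rewrite H2, Rdiv_diag, acos_1 in Hlt by lra. lra. }
  pose proof (vnorm_pos n Q HQ). pose proof (vnorm_pos n Y HY).
  set (c := d * vnorm n Y / vnorm n Q).
  destruct (angle_rotate_le n y0 Y Q d c) as [Hv Hang]; auto.
  - rewrite dot_sym. apply HX; auto.
  - rewrite dot_sym. apply HP; auto.
  - unfold c. field. lra.
  - exists (vadd y0 (vscal c Q)). split; [|split; auto].
    + apply in_span_ext_iff. exists (vsub y0 (vscal c P)), c. split.
      * apply in_span_sub, in_span_scal; [| apply HP]; auto.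
      * intros. unfold Q, vadd, vsub, vscal. ring.
    + rewrite (angle_ext n u _ _ _ Hu' (fun _ _ => eq_refl)).
      eapply Rle_trans; [exact Hang|].
      rewrite Eang in *. unfold t.
      apply perp_angle_le with (x := vnorm n X) (s := dot n P X); auto using vnorm_nonneg, vnorm_pos, dot_le.
Qed.

End Bound.

Theorem lemma2 (n m : nat) (a : nat -> vec) (b bt : vec) :
  nonzero_vec n b -> nonzero_vec n bt ->
  exists t : R,
    angle_to_subspace n bt (in_span n m a) t /\
    (0 < t ->
     forall u, in_span_ext n m a b u -> nonzero_vec n u ->
       exists v, in_span_ext n m a bt v /\ nonzero_vec n v /\
         angle n u v <= (PI / 2) * (angle n bt b / t)).
Proof.
  intros Hb Hbt.
  destruct (orth_proj_exists n m a bt) as [P HP].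
  destruct (orth_proj_exists n m a b) as [X HX].
  exists (acos (vnorm n P / vnorm n bt)).
  split; [apply angle_to_span_orth_proj; auto|].
  intros Ht u Hu Hnu.
  destruct (Rlt_or_le (angle n bt b) (acos (vnorm n P / vnorm n bt))) as [Hlt|Hge].
  - apply ext_span_angle_bound with X; auto.
  - destruct (exists_in_span_ext_angle_le_PI2 n m a bt u Hbt Hnu) as [v [Hv [Hnv Hang]]].
    exists v. split; [|split]; auto.
    apply Rle_trans with (PI / 2); auto.
    pose proof PI_RGT_0.
    rewrite <- (Rmult_1_r (PI / 2)) at 1. apply Rmult_le_compat_l; [lra|].
    apply Rmult_le_reg_r with (acos (vnorm n P / vnorm n bt)); auto.
    unfold Rdiv. rewrite Rmult_assoc, Rinv_l by lra. lra.
Qed.
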